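(* Let $F_3$ be the free group on the generators $a,b,c$, and let $\sigma_1,\sigma_2$ be substitutions on the alphabet $\{a,b,c\}$ (each letter is mapped to a nonempty finite word in $a,b,c$ using only positive powers), each extended to an endomorphism of $F_3$, and assume each $\sigma_i$ acts as an automorphism of $F_3$. Assume that the substitution (abelianisation) matrix of $\sigma_1$ is primitive and unimodular, has irreducible characteristic polynomial, and has a Perron–Frobenius eigenvalue which is a Pisot number. Suppose there exists a fixed element $w\in F_3$ such that $\sigma_1(g)=w^{-1}\sigma_2(g)\,w$ for every generator $g\in\{a,b,c\}$. Then the tilings (equivalently, the bi-infinite sequences) generated by $\sigma_1$ and $\sigma_2$ are locally isomorphic, i.e. they have exactly the same finite subpatterns: the language of $\sigma_1$ equals the language of $\sigma_2$.
   Context: The substitution matrix of $\sigma$ is the $3\times 3$ matrix whose $(i,j)$ entry counts the occurrences of letter $i$ in $\sigma(j)$. The language of a substitution $\sigma$ is the set of all finite words occurring as factors (subwords) of $\sigma^n(x)$ for some $n\ge 0$ and some letter $x\in\{a,b,c\}$. The tilings generated by $\sigma$ are the geometric realisations of the bi-infinite sequences whose finite factors all lie in this language, with tile $i$ an interval of length equal to the $i$-th component of the left Perron–Frobenius eigenvector of the substitution matrix. Two tilings (or sequences) are locally isomorphic (LI) if every finite subpattern of one occurs in the other and vice versa. *)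

From HB Require Import structures.
From mathcomp Require Import all_boot all_order all_algebra all_field.
Set Implicit Arguments. Unset Strict Implicit. Unset Printing Implicit Defensive.
Import Order.TTheory GRing.Theory Num.Theory.
Local Open Scope ring_scope.

(* Alphabet {a,b,c} = 'I_3 (a = 0, b = 1, c = 2). *)
Definition letter := 'I_3.

(* A substitution: each letter is sent to a finite word of letters
   (positivity of powers is built in; non-emptiness is a hypothesis). *)
Definition subst := letter -> seq letter.

Definition subst_word (s : subst) (w : seq letter) : seq letter :=
  flatten (map s w).

Definition language (s : subst) (u : seq letter) : Prop :=
  exists (n : nat) (x : letter), infix u (iter n (subst_word s) [:: x]).

(* Group words: letters with a sign (true = positive power, false = inverse). *)
Definition gletter := (letter * bool)%type.
Definition gword := seq gletter.

Definition push (x : gletter) (w : gword) : gword :=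
  match w with
  | y :: w' => if (y.1 == x.1) && (y.2 != x.2) then w' else x :: w
  | [::] => [:: x]
  end.

(* free reduction; the elements of F_3 are the reduced words *)
Definition freduce (w : gword) : gword := foldr push [::] w.
Definition reduced (w : gword) : bool := freduce w == w.

Definition ginv (w : gword) : gword := rev (map (fun p => (p.1, ~~ p.2)) w).
Definition gpos (w : seq letter) : gword := map (fun x => (x, true)) w.

Definition fendo (s : subst) (w : gword) : gword :=
  freduce (flatten (map (fun p : gletter =>
     if p.2 then gpos (s p.1) else ginv (gpos (s p.1))) w)).

Definition is_free_aut (s : subst) : Prop :=
  (forall u v, reduced u -> reduced v -> fendo s u = fendo s v -> u = v) /\
  (forall v, reduced v -> exists u, reduced u /\ fendo s u = v).

Definition subst_mx (s : subst) : 'M[int]_3 :=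
  \matrix_(i < 3, j < 3) (count_mem i (s j))%:Z.

Definition primitive_mx (M : 'M[int]_3) : Prop :=
  exists k : nat, forall i j, 0 < (M ^+ k) i j.

Definition unimodular_mx (M : 'M[int]_3) : Prop := `|\det M| = 1.

Definition char_poly_irreducible (M : 'M[int]_3) : Prop :=
  irreducible_poly (char_poly (map_mx (intr : int -> rat) M)).

Definition PF_eigenvalue (M : 'M[int]_3) (l : algC) : Prop :=
  root (char_poly (map_mx (intr : int -> algC) M)) l /\
  0 <= l /\
  (forall mu, root (char_poly (map_mx (intr : int -> algC) M)) mu -> `|mu| <= l).

Definition pisot (l : algC) : Prop :=
  1 < l /\
  exists p : {poly int},
    p \is monic /\ irreducible_poly (map_poly (intr : int -> rat) p) /\
    root (map_poly (intr : int -> algC) p) l /\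
    (forall mu, root (map_poly (intr : int -> algC) p) mu -> mu != l -> `|mu| < 1).

(* If sigma1(g) = w^-1 sigma2(g) w in F_3 for every letter g, then by induction
   sigma1^n(z) is freely equal to V^-1 sigma2^n(z) V for some V.  A positive word
   freely conjugate to a positive word q is a cyclic rotation of q: peel off V one
   letter at a time; each letter must cancel against an end of q, otherwise the
   conjugate is already reduced and contains a negative letter.  By primitivity
   every letter occurs in sigma^K(y), so sigma^(n+2K)(x) starts with two blocks
   that each contain every factor of sigma^n(z), and a rotation cuts at most one
   of them. *)
From HB Require Import structures.
From mathcomp Require Import all_boot all_order all_algebra all_field zify.
Import Order.TTheory GRing.Theory Num.Theory.
Set Implicit Arguments. Unset Strict Implicit.

Arguments push : simpl never.

Definition glinv (p : gletter) : gletter := (p.1, ~~ p.2).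

Lemma glinvK : involutive glinv.
Proof. by case=> a b; rewrite /glinv /= negbK. Qed.

Lemma pushE x w : push x w =
  if w is y :: w' then (if y == glinv x then w' else x :: w) else [:: x].
Proof.
case: w => //= -[c d] w; rewrite /push /glinv /= xpair_eqE.
by case: x => a [] /=; case: d.
Qed.

Definition freely_reduced (w : gword) := sorted (fun x y => y != glinv x) w.

Lemma freely_reduced_push x w : freely_reduced w -> freely_reduced (push x w).
Proof.
rewrite pushE; case: w => [|y w] //= h; case: ifP => [_ | /negbT hy] /=.
  exact: path_sorted h.
by rewrite /freely_reduced /= hy.
Qed.

Lemma push_glinvK x w : freely_reduced w -> push (glinv x) (push x w) = w.
Proof.
case: w => [|y w] h; rewrite (pushE x) /=; first by rewrite pushE glinvK eqxx.
case: ifP => [/eqP ey | _]; last by rewrite pushE glinvK eqxx.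
subst y; case: w h => [|z w] /=; first by rewrite pushE.
by case/andP=> /negbTE hz _; rewrite pushE hz.
Qed.

Lemma freely_reduced_freduce w : freely_reduced (freduce w).
Proof. elim: w => //= x w IH; exact: freely_reduced_push. Qed.

Lemma freduce_id w : freely_reduced w -> freduce w = w.
Proof.
elim: w => //= x w IH h; rewrite IH; last exact: path_sorted h.
rewrite pushE; case: w h {IH} => //= y w /andP[h _].
by rewrite (negbTE h).
Qed.

Definition push_all (a r : gword) := foldr push r a.

Lemma freduce_cat a b : freduce (a ++ b) = push_all a (freduce b).
Proof. by rewrite /freduce /push_all foldr_cat. Qed.

Lemma push_all_cat a b r : push_all (a ++ b) r = push_all a (push_all b r).
Proof. by rewrite /push_all foldr_cat. Qed.

Lemma freely_reduced_push_all a r :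
  freely_reduced r -> freely_reduced (push_all a r).
Proof. elim: a => //= x a IH h; exact/freely_reduced_push/IH. Qed.

Lemma push_all_push x s r : freely_reduced s -> freely_reduced r ->
  push_all (push x s) r = push x (push_all s r).
Proof.
move=> hs hr; rewrite pushE; case: s hs => [|y s] //= hs.
case: ifP => // /eqP ->.
by rewrite /= -{1}(glinvK x) push_glinvK // freely_reduced_push_all.
Qed.

Lemma push_all_freduce a r :
  freely_reduced r -> push_all (freduce a) r = push_all a r.
Proof.
move=> hr; elim: a => //= x a IH.
by rewrite push_all_push ?freely_reduced_freduce // IH.
Qed.

Definition feq a b := freduce a = freduce b.

Lemma feq_refl a : feq a a. Proof. by []. Qed.
Lemma feq_sym a b : feq a b -> feq b a. Proof. by []. Qed.
Lemma feq_trans a b c : feq a b -> feq b c -> feq a c.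
Proof. by rewrite /feq => ->. Qed.

Lemma feq_freduce a : feq (freduce a) a.
Proof. by rewrite /feq freduce_id // freely_reduced_freduce. Qed.

Lemma feq_cat a a' b b' : feq a a' -> feq b b' -> feq (a ++ b) (a' ++ b').
Proof.
rewrite /feq !freduce_cat => ha ->.
by rewrite -push_all_freduce ?freely_reduced_freduce // ha
  push_all_freduce // freely_reduced_freduce.
Qed.

Lemma ginv_cons x a : ginv (x :: a) = ginv a ++ [:: glinv x].
Proof. by rewrite /ginv /= rev_cons cats1. Qed.

Lemma ginv_cat a b : ginv (a ++ b) = ginv b ++ ginv a.
Proof. by rewrite /ginv map_cat rev_cat. Qed.

Lemma ginvK : involutive ginv.
Proof.
move=> a; rewrite /ginv map_rev revK -map_comp -[RHS]map_id.
by apply: eq_map => -[x y] /=; rewrite negbK.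
Qed.

Lemma feq_cat_ginv a c : feq (a ++ ginv a ++ c) c.
Proof.
rewrite /feq catA freduce_cat.
elim: a (freduce c) (freely_reduced_freduce c) => //= x a IH r hr.
rewrite ginv_cons catA push_all_cat /= IH ?freely_reduced_push //.
by rewrite -{1}(glinvK x) push_glinvK.
Qed.

Lemma feq_ginv_cat a c : feq (ginv a ++ a ++ c) c.
Proof. by rewrite -{2}(ginvK a); apply: feq_cat_ginv. Qed.

Lemma feq_ginv a b : feq a b -> feq (ginv a) (ginv b).
Proof.
move=> h; apply: feq_sym; apply: feq_trans (feq_sym (feq_ginv_cat a (ginv b))) _.
apply: feq_trans (feq_cat (feq_refl (ginv a)) (feq_cat h (feq_refl (ginv b)))) _.
rewrite -[X in feq _ X]cats0; apply: feq_cat => //.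
by have := feq_cat_ginv b [::]; rewrite cats0.
Qed.

Lemma gpos_cat a b : gpos (a ++ b) = gpos a ++ gpos b.
Proof. by rewrite /gpos map_cat. Qed.

Lemma gpos_inj : injective gpos.
Proof. by apply: inj_map => x y [->]. Qed.

Lemma subst_word_cat s a b :
  subst_word s (a ++ b) = subst_word s a ++ subst_word s b.
Proof. by rewrite /subst_word map_cat flatten_cat. Qed.

Lemma iter_subst_word_cat s n a b :
  iter n (subst_word s) (a ++ b) =
  iter n (subst_word s) a ++ iter n (subst_word s) b.
Proof. by elim: n => //= n ->; rewrite subst_word_cat. Qed.

(* [fendo s] is [freduce \o gext s]. *)
Definition gext_letter (s : subst) (p : gletter) : gword :=
  if p.2 then gpos (s p.1) else ginv (gpos (s p.1)).
Definition gext (s : subst) (a : gword) : gword := flatten (map (gext_letter s) a).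

Lemma gext_cons s x a : gext s (x :: a) = gext_letter s x ++ gext s a.
Proof. by []. Qed.

Lemma gext_cat s a b : gext s (a ++ b) = gext s a ++ gext s b.
Proof. by rewrite /gext map_cat flatten_cat. Qed.

Lemma gext_ginv s a : gext s (ginv a) = ginv (gext s a).
Proof.
elim: a => //= x a IH; rewrite ginv_cons gext_cat IH gext_cons ginv_cat.
by rewrite /gext /= cats0; case: x => c [] //; rewrite /gext_letter /= ginvK.
Qed.

Lemma gext_gpos s z : gext s (gpos z) = gpos (subst_word s z).
Proof.
elim: z => //= x z IH.
by rewrite -/(gpos z) gext_cons IH /subst_word /= gpos_cat.
Qed.

Lemma gext_freduce s a : feq (gext s (freduce a)) (gext s a).
Proof.
elim: a => //= x a IH; rewrite gext_cons.
apply: (@feq_trans _ (gext_letter s x ++ gext s (freduce a))); last exact: feq_cat.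
rewrite pushE.
case: (freduce a) => [|y t]; first by rewrite /gext /= cats0.
case: ifP => [/eqP -> | _] //; rewrite gext_cons.
suff -> : gext_letter s (glinv x) = ginv (gext_letter s x).
  exact/feq_sym/feq_cat_ginv.
by case: x => c [] //=; rewrite /gext_letter /= ginvK.
Qed.

Lemma feq_gext s a b : feq a b -> feq (gext s a) (gext s b).
Proof.
move=> h; apply: feq_trans (feq_sym (gext_freduce s a)) _.
by rewrite h; apply: gext_freduce.
Qed.

Lemma feq_iter_gext s n a b :
  feq a b -> feq (iter n (gext s) a) (iter n (gext s) b).
Proof. elim: n => //= n IH h; exact/feq_gext/IH. Qed.

Lemma iter_gext_cat s n a b :
  iter n (gext s) (a ++ b) = iter n (gext s) a ++ iter n (gext s) b.
Proof. by elim: n => //= n ->; rewrite gext_cat. Qed.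

Lemma iter_gext_ginv s n a : iter n (gext s) (ginv a) = ginv (iter n (gext s) a).
Proof. by elim: n => //= n ->; rewrite gext_ginv. Qed.

Lemma iter_gext_gpos s n z :
  iter n (gext s) (gpos z) = gpos (iter n (subst_word s) z).
Proof. by elim: n => //= n ->; rewrite gext_gpos. Qed.

Lemma freely_reduced_gpos p : freely_reduced (gpos p).
Proof.
by elim: p => //= x [|y p] //= IH; rewrite /glinv /= xpair_eqE andbF.
Qed.

Lemma all_snd_gpos p : all (fun x : gletter => x.2) (gpos p).
Proof. by rewrite all_map; apply/allP. Qed.

Lemma freely_reduced_ginv V : freely_reduced V -> freely_reduced (ginv V).
Proof.
rewrite /freely_reduced /ginv rev_sorted sorted_map; apply: sub_sorted.
move=> [a b] [c d] /=; apply: contra; rewrite /glinv !xpair_eqE /=.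
by case/andP=> /eqP-> /eqP->; rewrite negbK !eqxx.
Qed.

Lemma freely_reduced_rcons_cat a x y b : y != glinv x ->
  freely_reduced (rcons a x) -> freely_reduced (y :: b) ->
  freely_reduced (rcons a x ++ y :: b).
Proof.
move=> hxy; case: a => [|a0 a] /=.
  by rewrite /freely_reduced /= => _ h; apply/andP.
by rewrite /freely_reduced /= cat_path last_rcons /= => -> ->; rewrite hxy.
Qed.

Lemma feq_conj_head c V q :
  feq (ginv ((c, true) :: V) ++ gpos (c :: q) ++ (c, true) :: V)
      (ginv V ++ gpos (rcons q c) ++ V).
Proof.
rewrite ginv_cons -catA /=; apply: feq_cat => //.
apply: feq_trans (feq_ginv_cat [:: (c, true)] _) _.
by rewrite /gpos map_rcons -cats1 -catA.
Qed.

Lemma feq_conj_last c V q :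
  feq (ginv ((c, false) :: V) ++ gpos (rcons q c) ++ (c, false) :: V)
      (ginv V ++ gpos (c :: q) ++ V).
Proof.
rewrite ginv_cons -catA; apply: feq_cat => //=.
rewrite /gpos map_rcons -cats1 -catA /=; apply: (@feq_cat [:: _] [:: _]) => //.
by apply: feq_cat => //; apply: (feq_cat_ginv [:: (c, true)] V).
Qed.

Lemma freely_reduced_conj y V d q q0 e : d :: q = rcons q0 e ->
  freely_reduced (y :: V) -> ~~ (y.2 && (d == y.1)) -> ~~ (~~ y.2 && (e == y.1)) ->
  freely_reduced (ginv (y :: V) ++ gpos (d :: q) ++ y :: V).
Proof.
case: y => c b eqq hV hd he; rewrite ginv_cons cats1.
have hVinv : freely_reduced (rcons (ginv V) (glinv (c, b))).
  by rewrite -cats1 -ginv_cons freely_reduced_ginv.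
have hqV : freely_reduced (gpos (d :: q) ++ (c, b) :: V).
  rewrite eqq /gpos map_rcons; apply: freely_reduced_rcons_cat => //.
    by rewrite /glinv /= xpair_eqE; move: he; case: (b) => /= [_ | /negbTE he];
      rewrite ?andbF // eq_sym he.
  rewrite -(map_rcons (fun x => (x, true))) -eqq.
  exact: (freely_reduced_gpos (d :: q)).
apply: freely_reduced_rcons_cat => //.
by rewrite glinvK xpair_eqE; move: hd; case: (b) => /= [/negbTE -> | _]; rewrite ?andbF.
Qed.

Lemma conj_gpos_rot V : freely_reduced V -> forall q p,
  freduce (ginv V ++ gpos q ++ V) = gpos p -> exists k, p = rot k q.
Proof.
elim: V => [|y V IH] hV q p.
  rewrite cats0 freduce_id ?freely_reduced_gpos // => /gpos_inj ->.
  by exists 0; rewrite rot0.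
have hV' : freely_reduced V := path_sorted hV.
case: q => [|d q].
  move=> h; have := feq_ginv_cat (y :: V) [::]; rewrite /feq cats0 /= h.
  by case: p {h} => // _; exists 0.
have [q0 [e eqq]] : exists q0 e, d :: q = rcons q0 e.
  by exists (belast d q), (last d q); rewrite lastI.
case hd: (y.2 && (d == y.1)).
  case: y hV hd => c [] //= hV /eqP -> h.
  have [k ->] := IH hV' (rcons q c) p (etrans (esym (feq_conj_head _ _ _)) h).
  by rewrite -rot1_cons rot_rot_add; eexists.
case he: (~~ y.2 && (e == y.1)).
  case: y hV hd he => c [] //= hV _ /eqP ec h; subst e.
  rewrite -[(d, true) :: _]/(gpos (d :: q) ++ _) eqq in h.
  have [k ->] := IH hV' (c :: q0) p (etrans (esym (feq_conj_last _ _ _)) h).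
  by rewrite eqq -{1}(rotr1_rcons c q0) /rotr rot_rot_add; eexists.
rewrite freduce_id ?(freely_reduced_conj eqq) ?hd ?he // => h.
have := all_snd_gpos p; rewrite -h.
case: y {hV hd he h} => c b; rewrite ginv_cons !all_cat /= !andbT.
by case: b; rewrite /= ?andbF.
Qed.

Section ConjugateSubstitutions.

Variables (s1 s2 : subst) (w : gword).
Hypothesis conj_s12 : forall g : letter,
  freduce (ginv w ++ gpos (s2 g) ++ w) = freduce (gpos (s1 g)).

Lemma feq_subst_word_conj z :
  feq (gpos (subst_word s1 z)) (ginv w ++ gpos (subst_word s2 z) ++ w).
Proof.
elim: z => [|g z IH]; first by have := feq_ginv_cat w [::]; rewrite cats0.
rewrite /subst_word /= -!/(subst_word _ _) !gpos_cat.
apply: feq_trans (feq_cat (feq_sym (conj_s12 g)) IH) _.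
by rewrite -!catA; do 2 apply: feq_cat => //; apply: feq_cat_ginv.
Qed.

Lemma feq_iter_subst_word_conj n z : exists V,
  feq (gpos (iter n (subst_word s1) z))
      (ginv V ++ gpos (iter n (subst_word s2) z) ++ V).
Proof.
elim: n z => [|n IH] z; first by exists [::]; rewrite /= cats0.
have [V hV] := IH (subst_word s1 z).
exists (iter n (gext s2) w ++ V); rewrite !iterSr; apply: feq_trans hV _.
rewrite -iter_gext_gpos.
apply: feq_trans (feq_cat (feq_refl _) (feq_cat
  (feq_iter_gext s2 n (feq_subst_word_conj z)) (feq_refl V))) _.
by rewrite !iter_gext_cat iter_gext_ginv iter_gext_gpos ginv_cat -!catA.
Qed.

Lemma iter_subst_word_rot n z :
  exists k, iter n (subst_word s1) z = rot k (iter n (subst_word s2) z).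
Proof.
have [V hV] := feq_iter_subst_word_conj n z.
apply: (conj_gpos_rot (freely_reduced_freduce V)).
move: hV; rewrite /feq freduce_id ?freely_reduced_gpos // => ->.
apply: feq_cat; first exact/feq_ginv/feq_freduce.
by apply: feq_cat => //; apply: feq_freduce.
Qed.

End ConjugateSubstitutions.

Lemma exists_rot_sym (T : Type) (p q : seq T) k :
  p = rot k q -> exists k', q = rot k' p.
Proof. by move=> ->; exists (size (rot k q) - k); rewrite -/(rotr k _) rotK. Qed.

Lemma infix_iter_subst_word s n u x z : infix u (iter n (subst_word s) [:: x]) ->
  x \in z -> infix u (iter n (subst_word s) z).
Proof.
move=> hu /splitPr [z1 z2].
by rewrite iter_subst_word_cat -cat1s iter_subst_word_cat infix_catl ?infix_catr.
Qed.

(* A rotation cuts the word at one point only, so one of two disjoint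
   occurrences of [u] survives. *)
Lemma infix_rot_of_two_occurrences (T : eqType) (u A B C : seq T) k :
  infix u A -> infix u B -> infix u (rot k (A ++ B ++ C)).
Proof.
move=> /infixP [a1 [a2 ->]] /infixP [b1 [b2 ->]]; rewrite /rot.
case: (leqP (size a1 + size u) k) => hk.
  apply: infix_catl; rewrite -!catA take_cat; case: ltnP => h1; first lia.
  rewrite take_cat; case: ltnP => h2; first lia.
  by apply/infixP; exists a1; eexists.
apply: infix_catr.
rewrite (_ : _ ++ _ = (a1 ++ u ++ a2 ++ b1) ++ u ++ (b2 ++ C)); last by rewrite -!catA.
rewrite drop_cat ifT; last by rewrite !size_cat; lia.
by apply/infixP; eexists; eexists.
Qed.

Lemma sum_seq_count_mem (T : finType) (f : T -> nat) (z : seq T) :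
  \sum_(l <- z) f l = \sum_(l : T) f l * count_mem l z.
Proof.
elim: z => [|x z IH]; first by rewrite big_nil big1 // => l _; rewrite muln0.
rewrite big_cons IH [RHS](eq_bigr (fun l => f l * (x == l) + f l * count_mem l z));
  last by move=> l _; rewrite /= mulnDr.
rewrite big_split /=; congr (_ + _).
rewrite (bigD1 x) //= eqxx muln1 big1 ?addn0 // => l /negbTE.
by rewrite eq_sym => ->; rewrite muln0.
Qed.

Lemma count_mem_iter_subst_word s k i z :
  count_mem i (iter k (subst_word s) z) =
  \sum_(l <- z) count_mem i (iter k (subst_word s) [:: l]).
Proof.
elim: z => [|x z IH].
  by rewrite big_nil (_ : iter k _ [::] = [::]) //; elim: k => //= k ->.
by rewrite -cat1s iter_subst_word_cat count_cat IH big_cons.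
Qed.

Lemma subst_mx_expE s k (i j : letter) :
  (subst_mx s ^+ k)%R i j = Posz (count_mem i (iter k (subst_word s) [:: j])).
Proof.
elim: k i j => [|k IH] i j.
  by rewrite expr0 mxE /= addn0 eq_sym; case: eqP.
rewrite exprSr mxE iterSr count_mem_iter_subst_word /subst_word /= cats0.
rewrite sum_seq_count_mem (big_morph Posz PoszD erefl).
by apply: eq_bigr => l _; rewrite IH mxE PoszM.
Qed.

Lemma primitive_mem_iter s : primitive_mx (subst_mx s) ->
  exists K, forall i j : letter, i \in iter K (subst_word s) [:: j].
Proof.
move=> [K hK]; exists K => i j; have := hK i j.
by rewrite subst_mx_expE ltz_nat -has_count has_pred1.
Qed.

(* Both letters 0 and 1 occur in [t^K(0)], so it has two letters [a], [b], and
   [t^(n+2K)(0)] begins with [t^(n+K)(a) ++ t^(n+K)(b)], each containing every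
   factor of [t^n(z)]. *)
Lemma language_sub_rot s t K :
  (forall n x, exists k,
     iter n (subst_word s) [:: x] = rot k (iter n (subst_word t) [:: x])) ->
  (forall i j : letter, i \in iter K (subst_word t) [:: j]) ->
  forall u, language t u -> language s u.
Proof.
move=> srot tK u [n [z hu]].
pose x0 : letter := ord0; pose x1 : letter := @Ordinal 3 1 isT.
have [a [b [r ex0]]] : exists a b r, iter K (subst_word t) [:: x0] = [:: a, b & r].
  case e: (iter K (subst_word t) [:: x0]) => [|a [|b r]]; last by exists a, b, r.
    by have := tK x0 x0; rewrite e.
  by have := tK x0 x0; have := tK x1 x0; rewrite e !inE => /eqP <- /eqP.
have hu' y : infix u (iter (n + K) (subst_word t) [:: y]).
  by rewrite iterD; apply: infix_iter_subst_word hu (tK z y).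
exists (n + K + K), x0; have [k ->] := srot (n + K + K) x0.
rewrite iterD ex0 -[[:: a, b & r]]/([:: a] ++ [:: b] ++ r) !iter_subst_word_cat.
exact: infix_rot_of_two_occurrences.
Qed.

Local Open Scope ring_scope.

Theorem mainTheorem1 (s1 s2 : subst) :
  (forall x, s1 x != [::]) -> (forall x, s2 x != [::]) ->
  is_free_aut s1 -> is_free_aut s2 ->
  primitive_mx (subst_mx s1) ->
  unimodular_mx (subst_mx s1) ->
  char_poly_irreducible (subst_mx s1) ->
  (exists l : algC, PF_eigenvalue (subst_mx s1) l /\ pisot l) ->
  (exists w : gword, forall g : letter,
      freduce (ginv w ++ gpos (s2 g) ++ w) = freduce (gpos (s1 g))) ->
  forall u : seq letter, language s1 u <-> language s2 u.
Proof.
move=> _ _ _ _ prim1 _ _ _ [w conj_s12] u.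
have rot12 := iter_subst_word_rot conj_s12.
have rot21 n z : exists k, iter n (subst_word s2) z = rot k (iter n (subst_word s1) z).
  by have [k] := rot12 n z; apply: exists_rot_sym.
have [K mem1] := primitive_mem_iter prim1.
have mem2 i j : i \in iter K (subst_word s2) [:: j].
  by have [k ->] := rot21 K [:: j]; rewrite mem_rot.
split; first exact: (language_sub_rot (fun n x => rot21 n [:: x]) mem1).
exact: (language_sub_rot (fun n x => rot12 n [:: x]) mem2).
Qed.
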